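(* Let $p$ be a prime, $n\ge1$, $d\ge2$, $I\subseteq\{0,\dots,n\}$, and let ${\bf a}_1,\dots,{\bf a}_N\in\mathbb{N}^{n+1}$ have coordinate sums $d$. Suppose $N\geq\mu_I+|U^I_{\min}|$ and that for each $u\in U^I_{\min}$ there exists $k_u$ with $1\le k_u\le|U^I_{\min}|$ such that $u={\bf a}^+_{\mu_I+k_u}+\sum_{j=1}^{\mu_I}{\bf a}_j^+$. Then the matrix $\bar A^I(\Lambda)$ is invertible (as a matrix over $\mathbb{F}_p(\Lambda_1,\dots,\Lambda_N)$, i.e. $\det\bar A^I(\Lambda)$ is a nonzero polynomial).
   Context: ${\bf a}_j^+=({\bf a}_j,1)\in\mathbb{N}^{n+2}$. The integer $\mu_I$ is defined by $\lceil |I|/d\rceil=\mu_I+1$. $U^I$ is the set of $u=(u_0,\dots,u_{n+1})\in\mathbb{N}^{n+2}$ with $\sum_{i=0}^nu_i=du_{n+1}$ and $u_i>0$ for all $i\in I$; $U^I_{\min}=\{u\in U^I: u_{n+1}=\mu_I+1\}$. The matrix $A^I(\Lambda)=[A^I_{uv}(\Lambda)]_{u,v\in U^I_{\min}}$ has entries $$A^I_{uv}(\Lambda)=(-1)^{\mu_I+1}\sum_{\nu\in\mathbb{N}^N,\ \sum_j\nu_j{\bf a}_j^+=pu-v}\frac{\Lambda_1^{\nu_1}\cdots\Lambda_N^{\nu_N}}{\nu_1!\cdots\nu_N!},$$ which lie in $(\mathbb{Q}\cap\mathbb{Z}_p)[\Lambda]$, and $\bar A^I(\Lambda)$ is its reduction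 modulo $p$. *)

From HB Require Import structures.
From mathcomp Require Import all_boot all_order all_algebra.
From mathcomp Require Import mpoly.
Set Implicit Arguments. Unset Strict Implicit. Unset Printing Implicit Defensive.
Import GRing.Theory Num.Theory.
Local Open Scope ring_scope.

(* Indices j = 1..N of the paper are represented by j : 'I_N (j0 = j - 1).
   Vectors in N^{n+1} are functions 'I_n.+1 -> nat; vectors in N^{n+2}
   are functions 'I_n.+2 -> nat, coordinate n+1 being ord_max. *)

(* mu1 = mu_I + 1 = ceil(|I|/d) *)
Definition mu1 (d c : nat) : nat := ((c + d.-1) %/ d)%N.

Definition aplus (n N : nat) (a : 'I_N -> 'I_n.+1 -> nat) (j : 'I_N)
  (i : 'I_n.+2) : nat :=
  if (i < n.+1)%N then a j (inord i) else 1%N.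

(* U^I_min: vectors u in N^{n+2} with sum_{i<=n} u_i = d u_{n+1},
   u_i > 0 for i in I, and u_{n+1} = mu_I + 1.  Such u have all coordinates
   bounded by d*(mu_I+1), so they live in the finite type below. *)
Definition Ubox (n d m : nat) := {ffun 'I_n.+2 -> 'I_(d * m).+1}.

Definition Umin (n d : nat) (I : {set 'I_n.+1}) : {set Ubox n d (mu1 d #|I|)} :=
  [set u : Ubox n d (mu1 d #|I|) |
     [&& (\sum_(i < n.+2 | (i < n.+1)%N) (u i : nat) == d * u ord_max)%N,
         [forall i : 'I_n.+1, (i \in I) ==> (0 < u (widen_ord (leqnSn _) i))%N]
       & (u ord_max == mu1 d #|I| :> nat)]].

(* exponent vectors nu in N^N (bounded, which loses nothing: sum nu_j
   = p u_{n+1} - v_{n+1} <= p (mu_I+1)) *)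
Definition NuBox (N p m : nat) := {ffun 'I_N -> 'I_(p * m).+1}.

(* The entry A^I_{uv}(Lambda), a polynomial in Q[Lambda_1..Lambda_N].
   The condition sum_j nu_j a_j^+ = p u - v is written
   sum_j nu_j a_j^+ + v = p u  (coordinatewise in N). *)
Definition Aentry (n N d p : nat) (I : {set 'I_n.+1})
  (a : 'I_N -> 'I_n.+1 -> nat) (u v : Ubox n d (mu1 d #|I|)) : {mpoly rat[N]} :=
  \sum_(nu : NuBox N p (mu1 d #|I|) |
          [forall i : 'I_n.+2,
             (\sum_(j < N) (nu j : nat) * aplus a j i + v i == p * u i)%N])
     (((-1) ^+ mu1 d #|I|) / ((\prod_(j < N) (nu j : nat)`!)%N)%:R)
       *: 'X_[[multinom (nu j : nat) | j < N]].

(* Reduction modulo p of a rational: num/den in lowest terms mapped to F_p.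
   (For p-integral rationals this is the usual reduction.) *)
Definition redQ (p : nat) (q : rat) : 'F_p :=
  (numq q)%:~R / (denq q)%:~R.

Definition redP (N p : nat) (P : {mpoly rat[N]}) : {mpoly 'F_p[N]} :=
  \sum_(m <- msupp P) redQ p (P@_m) *: 'X_[m].

(* The matrix \bar A^I(Lambda), rows/columns indexed by U^I_min
   (via an enumeration of U^I_min; the determinant does not depend on it). *)
Definition Abar (n N d p : nat) (I : {set 'I_n.+1})
  (a : 'I_N -> 'I_n.+1 -> nat) : 'M[{mpoly 'F_p[N]}]_(#|Umin d I|) :=
  \matrix_(r, c) redP p (Aentry p a (enum_val r) (enum_val c)).

From HB Require Import structures.
From mathcomp Require Import all_boot all_order all_algebra all_fingroup.
From mathcomp Require Import mpoly zify.
Set Implicit Arguments. Unset Strict Implicit. Unset Printing Implicit Defensive.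
Import GRing.Theory Num.Theory.

(* Write S = a_1^+ + ... + a_mu^+ (mu = mu_I) and u = a_{j_u}^+ + S for u in U^I_min.
   The diagonal entry at u contains the monomial with exponent
   nu_u = (p-1)(e_1 + ... + e_mu + e_{j_u}), since sum_j nu_u,j a_j^+ = (p-1) u, and its
   coefficient (-1)^(mu+1) / prod_j nu_u,j! is a unit mod p.  We show that the product M
   of these monomials arises in the expansion of det \bar A^I only from the diagonal.
   Let s be a permutation and nu_u exponents of terms in the entries (u, s u), all
   nu_u,j < p (otherwise the coefficient vanishes mod p), with sum_u nu_u = M.  The
   column sums force nu_u,j = p-1 for j <= mu; what remains says that
   p a_{j_u} = sum_{j > mu} nu_u,j a_j + a_{j_{s u}} with weights summing to p-1.  Pairing
   with a_{j_u}, summing over u and comparing with 2<x,y> <= |x|^2 + |y|^2, the column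
   sums make every one of these inequalities an equality, so a_{j_{s u}} = a_{j_u} and
   nu_u is supported on j_u: hence s = 1 and nu_u is the diagonal exponent. *)

Lemma nat_AGM2_sq m n : 2 * (m * n) <= m * m + n * n ?= iff (m == n).
Proof.
have [le_mn eq_mn] := nat_AGM2 m n; rewrite sqrnD in le_mn eq_mn.
split; first by lia.
by rewrite -eq_mn; apply/eqP/eqP; lia.
Qed.

Lemma leq_sum_eq (I : finType) (P : pred I) (x y : I -> nat) :
  (forall i, P i -> x i <= y i) ->
  \sum_(i | P i) x i = \sum_(i | P i) y i -> forall i, P i -> x i = y i.
Proof.
move=> le_xy eq_sum i Pi.
have [_] := leqif_sum (fun j Pj => leqif_eq (le_xy j Pj)).
by rewrite eq_sum eqxx => /esym/forall_inP/(_ i Pi)/eqP.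
Qed.

Definition dotn k (x y : 'I_k -> nat) := \sum_i x i * y i.

Lemma dotn_AGM k (x y : 'I_k -> nat) :
  2 * dotn x y <= dotn x x + dotn y y ?= iff [forall i, x i == y i].
Proof.
rewrite /dotn big_distrr -big_split /=.
by apply: leqif_sum => i _; apply: nat_AGM2_sq.
Qed.

Lemma dotn_AGM_eq k (x y : 'I_k -> nat) :
  2 * dotn x y = dotn x x + dotn y y -> x =1 y.
Proof. by move/eqP; rewrite (dotn_AGM x y).2 => /forallP eq_xy i; apply/eqP. Qed.

Section WeightedMeanRigidity.

Variables (k m p : nat) (J : finType) (P : pred J).
Variables (al : J -> 'I_k -> nat) (be : 'I_m -> 'I_k -> nat).
Variables (f : 'I_m -> J -> nat) (s : 'S_m).

Hypothesis p_gt0 : 0 < p.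
Hypothesis mean : forall r i,
  \sum_(j | P j) f r j * al j i + be (s r) i = p * be r i.
Hypothesis row_sum : forall r, \sum_(j | P j) f r j = p.-1.
Hypothesis col_sum :
  \sum_r \sum_(j | P j) f r j * dotn (al j) (al j) = p.-1 * \sum_r dotn (be r) (be r).

Let agm_lo r := \sum_(j | P j) f r j * (2 * dotn (al j) (be r)) + 2 * dotn (be (s r)) (be r).
Let agm_hi r := \sum_(j | P j) f r j * (dotn (al j) (al j) + dotn (be r) (be r))
             + (dotn (be (s r)) (be (s r)) + dotn (be r) (be r)).

Lemma dotn_mean r :
  \sum_(j | P j) f r j * dotn (al j) (be r) + dotn (be (s r)) (be r)
  = p * dotn (be r) (be r).
Proof.
rewrite /dotn big_distrr /=.
under eq_bigr do rewrite big_distrr /=.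
rewrite exchange_big -big_split /=; apply: eq_bigr => i _.
rewrite mulnA -mean mulnDl big_distrl /=; congr (_ + _).
by apply: eq_bigr => j _; rewrite mulnA.
Qed.

Lemma leq_weighted_AGM r j : P j ->
  f r j * (2 * dotn (al j) (be r)) <= f r j * (dotn (al j) (al j) + dotn (be r) (be r)).
Proof. by move=> _; rewrite leq_mul2l dotn_AGM orbT. Qed.

Lemma leq_agm r : agm_lo r <= agm_hi r.
Proof. by apply: leq_add; [apply: leq_sum; apply: leq_weighted_AGM | apply: dotn_AGM]. Qed.

(* Both sides equal 2 p sum_r |be r|^2: the left one by [dotn_mean], the right one
   by the row and column sums. *)
Lemma sum_agm_eq : \sum_r agm_lo r = \sum_r agm_hi r.
Proof.
pose Q := \sum_r dotn (be r) (be r).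
have -> : \sum_r agm_lo r = 2 * (p * Q).
  rewrite /Q !big_distrr; apply: eq_bigr => r _ /=.
  rewrite -dotn_mean mulnDr big_distrr; congr (_ + _).
  by apply: eq_bigr => j _; rewrite mulnCA.
have rows : \sum_r \sum_(j | P j) f r j * dotn (be r) (be r) = p.-1 * Q.
  by rewrite /Q big_distrr; apply: eq_bigr => r _; rewrite -big_distrl row_sum.
have perm_Q : \sum_r dotn (be (s r)) (be (s r)) = Q.
  by rewrite /Q [RHS](reindex_inj (@perm_inj _ s)).
rewrite /agm_hi big_split /= big_split /= perm_Q -/Q.
under eq_bigr do under eq_bigr do rewrite mulnDr.
under eq_bigr do rewrite big_split /=.
rewrite big_split /= col_sum -/Q rows.
by case: p p_gt0 => // p' _ /=; lia.
Qed.

Lemma agm_eq_parts r :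
  \sum_(j | P j) f r j * (2 * dotn (al j) (be r))
    = \sum_(j | P j) f r j * (dotn (al j) (al j) + dotn (be r) (be r))
  /\ 2 * dotn (be (s r)) (be r) = dotn (be (s r)) (be (s r)) + dotn (be r) (be r).
Proof.
have : agm_lo r = agm_hi r by exact: leq_sum_eq (fun r _ => leq_agm r) sum_agm_eq r isT.
rewrite /agm_lo /agm_hi.
have := (dotn_AGM (be (s r)) (be r)).1; have := leq_sum (index_enum J) (@leq_weighted_AGM r).
lia.
Qed.

Lemma mean_rigid_perm r : be (s r) =1 be r.
Proof. exact/dotn_AGM_eq/(agm_eq_parts r).2. Qed.

Lemma mean_rigid_support r j : P j -> 0 < f r j -> al j =1 be r.
Proof.
move=> Pj f_gt0; apply: dotn_AGM_eq; apply/eqP.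
rewrite -(eqn_pmul2l f_gt0); apply/eqP.
exact: leq_sum_eq (leq_weighted_AGM r) (agm_eq_parts r).1 j Pj.
Qed.

End WeightedMeanRigidity.

Section DiagonalExponent.

Variables (k m p : nat) (J : finType) (B : pred J).
Variables (al : J -> 'I_k -> nat) (jr : 'I_m -> J) (i0 : 'I_k).

(* The exponents of the monomial (Lambda_1 ... Lambda_mu_I Lambda_{j_u})^(p-1) in the
   diagonal entry of row u, where B marks the indices 1..mu_I and jr u = j_u. *)
Definition diag_exp r j := if B j then p.-1 else if j == jr r then p.-1 else 0.

Hypothesis p_gt0 : 0 < p.
Hypothesis al_i0 : forall j, al j i0 = 1.
Hypothesis jr_notB : forall r, ~~ B (jr r).
Hypothesis al_jr_inj : forall r r', al (jr r) =1 al (jr r') -> r = r'.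

Lemma diag_exp_off_base r (F : J -> nat) :
  \sum_(j | ~~ B j) diag_exp r j * F j = p.-1 * F (jr r).
Proof.
rewrite (bigD1 (jr r) (jr_notB r)) /= big1 ?addn0.
  by rewrite /diag_exp (negbTE (jr_notB r)) eqxx.
by move=> j /andP [/negbTE nBj /negbTE njr]; rewrite /diag_exp nBj njr.
Qed.

Variables (s : 'S_m) (f : 'I_m -> J -> nat).

Let S i := \sum_(j | B j) al j i.

Hypothesis f_eq : forall r i,
  \sum_j f r j * al j i + (al (jr (s r)) i + S i) = p * (al (jr r) i + S i).
Hypothesis f_lt : forall r j, f r j < p.
Hypothesis f_col_sum : forall j, \sum_r f r j = \sum_r diag_exp r j.

Lemma diag_exp_base r j : B j -> f r j = p.-1.
Proof.
move=> Bj; have := f_col_sum j; rewrite /diag_exp Bj.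
move/(leq_sum_eq (P := predT) (y := fun=> p.-1)) => -> //.
by move=> r' _; rewrite -ltnS prednK.
Qed.

Lemma diag_exp_mean r i :
  \sum_(j | ~~ B j) f r j * al j i + al (jr (s r)) i = p * al (jr r) i.
Proof.
have := f_eq r i; rewrite (bigID B) /=.
rewrite (eq_bigr (fun j => p.-1 * al j i)) => [|j Bj]; last by rewrite diag_exp_base.
rewrite -big_distrr /= -/(S i).
by case: p p_gt0 => // p' _ /=; lia.
Qed.

Lemma diag_exp_row_sum r : \sum_(j | ~~ B j) f r j = p.-1.
Proof.
have := diag_exp_mean r i0; rewrite !al_i0 muln1.
under eq_bigr do rewrite al_i0 muln1.
by case: p p_gt0 => // p' _ /=; lia.
Qed.

Lemma diag_exp_col_sum :
  \sum_r \sum_(j | ~~ B j) f r j * dotn (al j) (al j)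
  = p.-1 * \sum_r dotn (al (jr r)) (al (jr r)).
Proof.
rewrite exchange_big /=.
under eq_bigr do rewrite -big_distrl /= f_col_sum big_distrl /=.
rewrite exchange_big big_distrr /=.
by apply: eq_bigr => r _; rewrite diag_exp_off_base.
Qed.

Lemma diag_exp_unique : s = 1%g /\ forall r j, f r j = diag_exp r j.
Proof.
have rigid_perm := mean_rigid_perm p_gt0 diag_exp_mean diag_exp_row_sum diag_exp_col_sum.
have rigid_supp := mean_rigid_support p_gt0 diag_exp_mean diag_exp_row_sum diag_exp_col_sum.
have s1 : s = 1%g by apply/permP => r; rewrite perm1; exact: al_jr_inj (rigid_perm r).
have supp_jr r j : ~~ B j -> 0 < f r j -> j = jr r.
  move=> nBj f_gt0.
  have : \sum_r' diag_exp r' j != 0 by rewrite -f_col_sum (bigD1 r) //= -lt0n ltn_addr.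
  rewrite sum_nat_eq0 => /forallPn [r' /=].
  rewrite /diag_exp (negbTE nBj); case: (j =P jr r') => [j_jr _|//].
  by rewrite j_jr; congr jr; apply: al_jr_inj; rewrite -j_jr; exact: rigid_supp nBj f_gt0.
split=> // r j; rewrite /diag_exp; case: ifPn => [|nBj]; first exact: diag_exp_base.
case: eqP => [->|/eqP njr]; last first.
  by have [//|/(supp_jr r j nBj) j_jr] := posnP (f r j); rewrite j_jr eqxx in njr.
rewrite -(diag_exp_row_sum r) (bigD1 (jr r)) ?jr_notB //= big1 ?addn0 //.
move=> j' /andP [nBj' nj'].
by have [//|/(supp_jr r j' nBj') j_jr] := posnP (f r j'); rewrite j_jr eqxx in nj'.
Qed.

End DiagonalExponent.

Local Open Scope ring_scope.

Lemma redQ0 p : redQ p 0 = 0.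
Proof. by rewrite /redQ mul0r. Qed.

Lemma mcoeff_redP N p (P : {mpoly rat[N]}) m : (redP p P)@_m = redQ p P@_m.
Proof.
rewrite /redP raddf_sum /=.
under eq_bigr do rewrite mcoeffZ mcoeffX.
have [Pm | nPm] := boolP (m \in msupp P).
  rewrite (bigD1_seq m) ?msupp_uniq //= eqxx mulr1 big1 ?addr0 // => m' /negbTE ->.
  by rewrite mulr0.
rewrite memN_msupp_eq0 // redQ0 big_seq big1 // => m' Pm'.
by rewrite (_ : m' == m = false) ?mulr0 //; apply: contraNF nPm => /eqP <-.
Qed.

Lemma mcoeff_sumX_inj N (R : nzRingType) (T : finType) (c : T -> R)
    (mo : T -> 'X_{1..N}) m : injective mo ->
  (\sum_t c t *: 'X_[mo t])@_m = if [pick t | mo t == m] is Some t then c t else 0.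
Proof.
move=> mo_inj; rewrite raddf_sum /=.
under eq_bigr do rewrite mcoeffZ mcoeffX.
case: pickP => [t0 /eqP <- | none]; last by rewrite big1 // => t _; rewrite none mulr0.
rewrite (bigD1 t0) //= eqxx mulr1 big1 ?addr0 // => t /negbTE nt.
by rewrite (inj_eq mo_inj) nt mulr0.
Qed.

Lemma prod_mpolyZX N (R : comNzRingType) (T : finType) (c : T -> R) (mo : T -> 'X_{1..N}) :
  \prod_t (c t *: 'X_[mo t]) = (\prod_t c t) *: 'X_[\sum_t mo t] :> {mpoly R[N]}.
Proof.
under eq_bigr do rewrite -mul_mpolyC.
rewrite big_split /= -rmorph_prod mul_mpolyC; congr (_ *: _).
by rewrite (big_morph (fun m => 'X_[m]) (@mpolyXD _ _) (@mpolyX0 _ _)).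
Qed.

Lemma mcoeff_det N (R : comNzRingType) k (T : finType) (w : 'I_k -> 'I_k -> T -> R)
    (mo : T -> 'X_{1..N}) (A : 'M[{mpoly R[N]}]_k) m :
  (forall r c, A r c = \sum_t w r c t *: 'X_[mo t]) ->
  (\det A)@_m = \sum_(s : 'S_k) (-1) ^+ s *
     \sum_(f : {ffun 'I_k -> T}) (\prod_r w r (s r) (f r)) * ((\sum_r mo (f r))%MM == m)%:R.
Proof.
move=> A_E; rewrite /determinant raddf_sum; apply: eq_bigr => s _.
rewrite -(rmorph_sign (@mpolyC N R)) /= mcoeffCM; congr (_ * _).
under eq_bigr do rewrite A_E.
rewrite bigA_distr_bigA raddf_sum; apply: eq_bigr => f _.
by rewrite prod_mpolyZX /= mcoeffZ mcoeffX.
Qed.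

Lemma redQ_sign_divn p mu k : (0 < k)%N -> redQ p ((-1) ^+ mu / k%:R) = (-1) ^+ mu / k%:R.
Proof.
move=> k_gt0.
have -> : ((-1) ^+ mu / k%:R : rat) = ((-1) ^+ mu : int)%:~R / (k%:Z)%:~R.
  by rewrite rmorph_sign.
have coprime_sign_k : coprime `|((-1) ^+ mu : int)|%N `|k%:Z|%N.
  by rewrite abszX /= exp1n coprime1n.
rewrite /redQ coprimeq_num // coprimeq_den // (_ : k%:Z == 0 = false).
  by rewrite gtr0_sg ?ltz_nat // mul1r rmorph_sign.
by clear coprime_sign_k; case: k k_gt0.
Qed.

Lemma prime_dvdn_fact p k : prime p -> (p %| k`!)%N = (p <= k)%N.
Proof.
move=> p_pr; apply/idP/idP => [|le_pk]; last by rewrite dvdn_fact // prime_gt0.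
apply: contraLR; rewrite -ltnNge => lt_kp.
rewrite fact_prod Euclid_dvd_prod // big_has; apply/hasPn => i.
rewrite mem_index_iota => /andP [i_gt0 lt_ik] /=.
by apply/negP => /(dvdn_leq i_gt0); lia.
Qed.

Definition monom N p mu (nu : NuBox N p mu) : 'X_{1..N} := [multinom (nu j : nat) | j < N].

Lemma monom_inj N p mu : injective (@monom N p mu).
Proof.
move=> nu nu' /mnmP eq_nu; apply/ffunP => j; apply/val_inj.
by have := eq_nu j; rewrite !mnmE.
Qed.

Definition redcoef N p mu (nu : NuBox N p mu) : 'F_p :=
  redQ p ((-1) ^+ mu / (\prod_(j < N) (nu j : nat)`!)%N%:R).

Lemma redcoef_neq0 N p mu (nu : NuBox N p mu) :
  prime p -> (redcoef nu != 0) = [forall j, (nu j < p)%N].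
Proof.
move=> p_pr; rewrite /redcoef redQ_sign_divn ?prodn_gt0 //; last by move=> j; exact: fact_gt0.
rewrite mulf_eq0 signr_eq0 invr_eq0 /= -(dvdn_pcharf (pchar_Fp p_pr)).
rewrite Euclid_dvd_prod // big_orE negb_exists; apply: eq_forallb => j /=.
by rewrite prime_dvdn_fact // ltnNge.
Qed.

Definition solves n N d p mu mu' (a : 'I_N -> 'I_n.+1 -> nat)
    (u v : Ubox n d mu) (nu : NuBox N p mu') : bool :=
  [forall i, \sum_j nu j * aplus a j i + v i == p * u i]%N.

Lemma Abar_entry n N d p (I : {set 'I_n.+1}) (a : 'I_N -> 'I_n.+1 -> nat) r c :
  Abar d p I a r c = \sum_(nu : NuBox N p (mu1 d #|I|))
     ((solves a (enum_val r) (enum_val c) nu)%:R * redcoef nu) *: 'X_[monom nu].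
Proof.
have ifE b x (P : {mpoly rat[N]}) : (if b then x *: P else 0) = (b%:R * x) *: P.
  by case: b; rewrite ?mul1r ?mul0r ?scale0r.
rewrite mxE /Aentry big_mkcond /=; under eq_bigr do rewrite ifE -/(solves _ _ _ _).
apply/mpolyP => m; rewrite mcoeff_redP !(mcoeff_sumX_inj _ _ (@monom_inj _ _ _)).
case: pickP => [nu _ | _]; last exact: redQ0.
by rewrite /redcoef; case: solves; rewrite ?mul1r // !mul0r redQ0.
Qed.

Lemma aplus_ord_max n N (a : 'I_N -> 'I_n.+1 -> nat) j : aplus a j ord_max = 1%N.
Proof. by rewrite /aplus ltnn. Qed.

Section DiagonalCoefficient.

Variables (p n d N : nat) (I : {set 'I_n.+1}) (a : 'I_N -> 'I_n.+1 -> nat).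

Local Notation mu := (mu1 d #|I|).
Local Notation m := #|Umin d I|.
Local Notation base := (fun j : 'I_N => (j.+1 < mu)%N).
Local Notation U r := (enum_val r : Ubox n d mu).

Variable jr : 'I_m -> 'I_N.

Hypothesis p_pr : prime p.
Hypothesis jr_ge : forall r, (mu <= (jr r).+1)%N.
Hypothesis UE : forall r i,
  U r i = (aplus a (jr r) i + \sum_(j | base j) aplus a j i)%N :> nat.

Lemma mu_gt0 (r : 'I_m) : (0 < mu)%N.
Proof.
have := enum_valP r; rewrite inE => /and3P [_ _ /eqP <-].
by rewrite UE aplus_ord_max.
Qed.

Lemma jr_not_base r : ~~ base (jr r).
Proof. by rewrite -leqNgt jr_ge. Qed.

Lemma aplus_jr_inj r r' : aplus a (jr r) =1 aplus a (jr r') -> r = r'.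
Proof.
move=> eq_jr; apply: enum_val_inj; apply/ffunP => i; apply/val_inj.
by rewrite /= !UE eq_jr.
Qed.

Definition diag_nu : {ffun 'I_m -> NuBox N p mu} :=
  [ffun r => [ffun j => inord (diag_exp p base jr r j)]].

Lemma diag_nuE r j : diag_nu r j = diag_exp p base jr r j :> nat.
Proof.
rewrite !ffunE inordK // ltnS (@leq_trans p.-1) //.
  by rewrite /diag_exp; case: ifP => //; case: ifP.
by rewrite (leq_trans (leq_pred p)) // leq_pmulr // (mu_gt0 r).
Qed.

Lemma solves_diag r : solves a (U r) (U r) (diag_nu r).
Proof.
apply/forallP => i; apply/eqP; under eq_bigr do rewrite diag_nuE.
rewrite UE (bigID base) /= (eq_bigr (fun j => p.-1 * aplus a j i)%N); last first.
  by move=> j bj; rewrite /diag_exp bj.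
rewrite -big_distrr diag_exp_off_base /=; last exact: jr_not_base.
by case: p (prime_gt0 p_pr) => // p' _ /=; lia.
Qed.

Let w (r c : 'I_m) (nu : NuBox N p mu) := (solves a (U r) (U c) nu)%:R * redcoef nu.
Let M := (\sum_r monom (diag_nu r))%MM.

Lemma diag_term_unique (s : 'S_m) (f : {ffun 'I_m -> NuBox N p mu}) :
  \prod_r w r (s r) (f r) != 0 -> (\sum_r monom (f r))%MM = M ->
  s = 1%g /\ f = diag_nu.
Proof.
move=> /prodf_neq0 w_neq0 /mnmP eq_M.
have f_solves r : solves a (U r) (U (s r)) (f r).
  by apply: contraTT (w_neq0 r isT) => /negbTE not_solves; rewrite /w not_solves mul0r eqxx.
have f_eq r i : (\sum_j f r j * aplus a j i + (aplus a (jr (s r)) i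
    + \sum_(j | base j) aplus a j i) = p * (aplus a (jr r) i + \sum_(j | base j) aplus a j i))%N.
  by have /forallP/(_ i)/eqP := f_solves r; rewrite !UE.
have f_lt r j : (f r j < p)%N.
  have := w_neq0 r isT; rewrite /w mulf_eq0 negb_or redcoef_neq0 //.
  by case/andP=> _ /forallP.
have f_col_sum j : (\sum_r f r j = \sum_r diag_exp p base jr r j)%N.
  have := eq_M j; rewrite /M !mnm_sumE.
  by under eq_bigr do rewrite mnmE; under [in RHS]eq_bigr do rewrite mnmE diag_nuE.
have [-> f_diag] := diag_exp_unique (prime_gt0 p_pr) (@aplus_ord_max n N a) jr_not_base
  aplus_jr_inj f_eq f_lt f_col_sum.
by split=> //; apply/ffunP => r; apply/ffunP => j; apply/val_inj; rewrite /= f_diag diag_nuE.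
Qed.

Lemma diag_term (s : 'S_m) (f : {ffun 'I_m -> NuBox N p mu}) :
  (\prod_r w r (s r) (f r)) * ((\sum_r monom (f r))%MM == M)%:R
  = ((s == 1%g) && (f == diag_nu))%:R * \prod_r redcoef (diag_nu r).
Proof.
have [/andP [/eqP -> /eqP ->] | not_diag] := boolP ((s == 1%g) && (f == diag_nu)).
  rewrite !eqxx mulr1 mul1r; apply: eq_bigr => r _.
  by rewrite perm1 /w solves_diag mul1r.
rewrite mul0r; have [eq_M|] := eqVneq (\sum_r monom (f r))%MM M; last by rewrite mulr0.
rewrite mulr1; apply/eqP; apply: contraNT not_diag => /diag_term_unique/(_ eq_M) [-> ->].
by rewrite !eqxx.
Qed.

Lemma mcoeff_det_Abar : (\det (Abar d p I a))@_M = \prod_r redcoef (diag_nu r).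
Proof.
rewrite (mcoeff_det _ (@Abar_entry n N d p I a)).
rewrite (eq_bigr (fun s : 'S_m => (-1) ^+ s * \sum_(f : {ffun 'I_m -> NuBox N p mu})
    ((s == 1%g) && (f == diag_nu))%:R * \prod_r redcoef (diag_nu r))); last first.
  by move=> s _; congr (_ * _); apply: eq_bigr => f _; apply: diag_term.
rewrite (bigD1 1%g) //= [X in _ + X]big1 ?addr0 => [|s /negbTE s_neq1]; last first.
  by rewrite big1 ?mulr0 // => f _; rewrite s_neq1 /= mul0r.
rewrite odd_perm1 mul1r (bigD1 diag_nu) //= [X in _ + X]big1 ?addr0; last first.
  move=> f /negbTE f_neq.
  by rewrite f_neq andbF mul0r.
by rewrite !eqxx mul1r.
Qed.

Lemma det_Abar_neq0 : \det (Abar d p I a) != 0.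
Proof.
have : (\det (Abar d p I a))@_M != 0.
  rewrite mcoeff_det_Abar; apply/prodf_neq0 => r _; rewrite redcoef_neq0 //.
  apply/forallP => j; rewrite diag_nuE /diag_exp.
  by have := prime_gt0 p_pr; case: ifP => _; [|case: ifP => _]; lia.
by apply: contraNneq => ->; rewrite mcoeff0.
Qed.

End DiagonalCoefficient.

Theorem theorem7p2 (p n d N : nat) (I : {set 'I_n.+1})
  (a : 'I_N -> 'I_n.+1 -> nat) :
  prime p -> (1 <= n)%N -> (2 <= d)%N ->
  (forall j : 'I_N, (\sum_(i < n.+1) a j i)%N = d) ->
  (* N >= mu_I + |U^I_min|, with mu_I = mu1 - 1 *)
  (mu1 d #|I| + #|Umin d I| <= N.+1)%N ->
  (forall u, u \in Umin d I ->
     exists k : nat, [/\ (1 <= k)%N, (k <= #|Umin d I|)%N &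
       exists j : 'I_N,
         (* j is the 0-based index of a_{mu_I + k} *)
         (j.+2 = mu1 d #|I| + k)%N /\
         forall i : 'I_n.+2,
           (u i : nat) = (aplus a j i +
              \sum_(j' < N | (j'.+1 < mu1 d #|I|)%N) aplus a j' i)%N]) ->
  \det (Abar d p I a) != 0.
Proof.
move=> p_pr _ _ _ _ decomp.
(* The bounds on n, d, N and the coordinate sums of the a_j are not needed. *)
have /fin_all_exists2 [jr jr_ge UE] : forall r : 'I_#|Umin d I|, exists2 j : 'I_N,
    (mu1 d #|I| <= j.+1)%N & forall i, (enum_val r : Ubox n d (mu1 d #|I|)) i
      = (aplus a j i + \sum_(j' : 'I_N | (j'.+1 < mu1 d #|I|)%N) aplus a j' i)%N :> nat.
  move=> r; have [k [k_ge1 _ [j [jE UjE]]]] := decomp _ (enum_valP r).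
  by exists j => //; lia.
exact: det_Abar_neq0 p_pr jr_ge UE.
Qed.
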